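(* Let $\mathcal{R}_i$ be a rule stratum of a stratifiable Datalog program and let $t \ge 0$. Assume every rule $r \in \mathcal{R}_i$ has arity $|\mathcal{X}(r)| \ge 2$ and every literal in its body $\mathrm{B}(r)$ has arity at most $2$. Fix a total order $\mathit{rank}$ on edges. For each $r \in \mathcal{R}_i$, with $k = |\mathcal{X}(r)|$, enumerate all $k$-cliques of the substitution consistency graph $\mathcal{G}(r, J_i^t)$ that are seeded at (i.e., contain) some edge $e \in \Delta\mathcal{E}_{i,r}^t$, and report such a clique $\mathcal{C}$ (from seed $e$) only if its owner $\omega(\mathcal{C})$ equals $e$. Let $H_i^t$ be the set of heads $\mathrm{H}(r[\rho])$ of the ground rules corresponding to the reported cliques $\{x/\rho(x) \mid x \in \mathcal{X}(r)\}$. Then $$H_i^t = \{\mathrm{H}(\bar r) \mid \bar r \in \mathrm{gr}(\mathcal{R}_i, J_i^t),\ \mathrm{B}(\bar r) \cap \Delta_i^t \neq \emptyset\},$$ and consequently $\Delta_i^{t+1} = H_i^t \setminus J_i^t$.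
   Context: A Datalog program is a pair $\langle \mathcal{F}, \mathcal{R}\rangle$ of a set $\mathcal{F}$ of facts (ground atoms over predicates with fixed arities) and a set $\mathcal{R}$ of rules $h \leftarrow b_1,\ldots,b_k$ with head atom $h=\mathrm{H}(r)$ and body literals $\mathrm{B}(r)=\{b_1,\ldots,b_k\}$ (atoms or negated atoms, whose arguments are variables or object constants). $\mathcal{X}(y)$ denotes the set of variables occurring in $y$, and the arity of $y$ is $|\mathcal{X}(y)|$; $\mathcal{O}$ is the set of objects. For a substitution $\rho$ (a map from variables to objects), $y[\rho]$ replaces each variable $x$ by $\rho(x)$. A ground rule is applicable in a fact set $J$ if every positive body atom is in $J$ and every negated body atom is not in $J$; $\mathrm{gr}(\mathcal{R}', J)$ is the set of ground instances of rules in $\mathcal{R}'$ applicable in $J$. A program is stratifiable if its predicates can be partitioned into strata $\mathcal{P}_1,\ldots,\mathcal{P}_\ell$ such that if $P$ occurs positively (resp. negatively) in the body of a rule whose head predicate is $P'$, with $P\in\mathcal{P}_a$, $P'\in\mathcal{P}_b$, then $a\le b$ (resp. $a<b$); rule stratum $\mathcal{R}_i$ consists of the rules whose head predicate is in $\mathcal{P}_i$. With $\mathcal{F}_0=\mathcal{F}$, semi-naive evaluation of stratum $i$ sets $J_i^0 = \Delta_i^0 = \mathcal{F}_{i-1}$, and for $t \ge 0$: $\Delta_i^{t+1} = \{\mathrm{H}(\bar r) \mid \bar r \in \mathrm{gr}(\mathcal{R}_i, J_i^t),\ \mathrm{B}(\bar r)\cap \Delta_i^t \neq \emptyset\} \setminus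 J_i^t$ and $J_i^{t+1} = J_i^t \cup \Delta_i^{t+1}$; it stops when $\Delta_i^t=\emptyset$, giving $\mathcal{F}_i = J_i^t$. Substitution consistency graph $\mathcal{G}(r,J)$ of a rule $r$ in a fact set $J$: vertex set $\{x/o \mid x \in \mathcal{X}(r), o \in \mathcal{O}\}$; the edges are all pairs $\{v,v'\}$ of vertices except those in $\mathcal{I}^{\neq}\cup\mathcal{I}^+\cup\mathcal{I}^-$, where $\mathcal{I}^{\neq}$ is the set of pairs $\{x/o_1, x/o_2\}$ with $o_1\neq o_2$; $\mathcal{I}^+$ is the set of pairs $\{v,v'\}$ such that some positive body atom $p$ of $r$, after applying the partial substitution $\{v,v'\}$, matches no atom of $J$; and $\mathcal{I}^-$ is the set of pairs $\{v,v'\}$ such that for some negated body atom $p$ of $r$, $p[v,v'] \in J$. An atom $P(x_1,\ldots,x_n)$ matches $P'(x_1',\ldots,x_n')$ iff $P=P'$ and for every $i$, $x_i$ or $x_i'$ is a variable or else $x_i = x_i'$. $\Delta$-edges: $\Delta\mathcal{E}_{i,r}^t = \mathcal{E}(\mathcal{G}(r, J_i^t)) \setminus \mathcal{E}(\mathcal{G}(r, J_i^{t-1}))$, with the convention $J_i^{-1} = \emptyset$. Owner: for a $k$-clique $\mathcal{C}$ ($k\ge2$) containing at least one edge of $\Delta\mathcal{E}_{i,r}^t$, $\omega(\mathcal{C})$ is the edge of $\Delta\mathcal{E}_{i,r}^t$ with both endpoints in $\mathcal{C}$ of minimum $\mathit{rank}$. *)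

From HB Require Import structures.
From mathcomp Require Import all_boot finmap.
Set Implicit Arguments. Unset Strict Implicit. Unset Printing Implicit Defensive.
Local Open Scope fset_scope.

Section Datalog.
Variables (Pred : eqType) (Var Obj : choiceType).

(* terms: inl x = variable x, inr o = object constant o *)
Definition term := (Var + Obj)%type.
Definition atom := (Pred * seq term)%type.
Definition fact := (Pred * seq Obj)%type.
(* literal: (true, a) = a, (false, a) = not a *)
Definition literal := (bool * atom)%type.
Definition rule := (atom * seq literal)%type.
Definition head (r : rule) : atom := r.1.
Definition body (r : rule) : seq literal := r.2.
Definition program := (seq fact * seq rule)%type.
Definition factset := fact -> Prop.

Definition wf_program (ar : Pred -> nat) (P : program) : Prop :=
  (forall f, f \in P.1 -> size f.2 = ar f.1) /\
  (forall r, r \in P.2 -> size (head r).2 = ar (head r).1 /\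
     forall l, l \in body r -> size l.2.2 = ar l.2.1).

Definition is_var (u : term) : bool := if u is inl _ then true else false.
Definition term_vars (u : term) : seq Var := if u is inl x then [:: x] else [::].
Definition atom_vars (a : atom) : seq Var := undup (flatten (map term_vars a.2)).
Definition atom_arity (a : atom) : nat := size (atom_vars a).
Definition rule_vars (r : rule) : seq Var :=
  undup (atom_vars (head r) ++ flatten (map (fun l : literal => atom_vars l.2) (body r))).
Definition rule_arity (r : rule) : nat := size (rule_vars r).

Definition subst := Var -> Obj.
Definition gterm (rho : subst) (u : term) : Obj :=
  match u with inl x => rho x | inr o => o end.
Definition gatom (rho : subst) (a : atom) : fact := (a.1, map (gterm rho) a.2).

Definition applicable (J : factset) (r : rule) (rho : subst) : Prop :=
  forall l, l \in body r -> if l.1 then J (gatom rho l.2) else ~ J (gatom rho l.2).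

Definition body_hits (D : factset) (r : rule) (rho : subst) : Prop :=
  exists a, (true, a) \in body r /\ D (gatom rho a).

Definition trig (Rs : seq rule) (J D : factset) : factset := fun f =>
  exists2 r, r \in Rs & exists rho, [/\ applicable J r rho, body_hits D r rho &
                                       f = gatom rho (head r)].

(* semi-naive evaluation: returns (J^t, Delta^t) *)
Fixpoint semi (Rs : seq rule) (F0 : factset) (t : nat) : factset * factset :=
  match t with
  | 0 => (F0, F0)
  | t'.+1 =>
      let JD := semi Rs F0 t' in
      let D' := fun f => trig Rs JD.1 JD.2 f /\ ~ JD.1 f in
      ((fun f => JD.1 f \/ D' f), D')
  end.

Definition stratification (P : program) (strat : Pred -> nat) (l : nat) : Prop :=
  (forall p, 1 <= strat p <= l) /\
  (forall r, r \in P.2 -> forall lit, lit \in body r ->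
     if lit.1 then strat lit.2.1 <= strat (head r).1
     else strat lit.2.1 < strat (head r).1).

Definition rule_stratum (P : program) (strat : Pred -> nat) (i : nat) : seq rule :=
  [seq r <- P.2 | strat (head r).1 == i].

(* F_0 = F, F_i = result of semi-naive evaluation of stratum i
   (the union of all J_i^t, i.e. J_i^t for the t at which Delta_i^t is empty) *)
Fixpoint Fstrat (P : program) (strat : Pred -> nat) (i : nat) : factset :=
  match i with
  | 0 => fun f => f \in P.1
  | i'.+1 => fun f => exists t,
      (semi (rule_stratum P strat i'.+1) (Fstrat P strat i') t).1 f
  end.

Definition Jst P strat i t : factset :=
  (semi (rule_stratum P strat i) (Fstrat P strat i.-1) t).1.
Definition Dst P strat i t : factset :=
  (semi (rule_stratum P strat i) (Fstrat P strat i.-1) t).2.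
(* J_i^{t-1}, with J_i^{-1} = empty *)
Definition Jprev P strat i t : factset :=
  match t with 0 => fun _ => False | t'.+1 => Jst P strat i t' end.

Definition vertex := (Var * Obj)%type.
Definition psubst (v v' : vertex) (u : term) : term :=
  match u with
  | inl x => if x == v.1 then inr v.2 else if x == v'.1 then inr v'.2 else u
  | inr _ => u
  end.
Definition patom (v v' : vertex) (a : atom) : atom := (a.1, map (psubst v v') a.2).
Definition lift_fact (f : fact) : atom := (f.1, map (@inr Var Obj) f.2).
Definition matches (a b : atom) : bool :=
  (a.1 == b.1) && all2 (fun u w => [|| is_var u, is_var w | u == w]) a.2 b.2.

Definition is_vertex (r : rule) (v : vertex) : bool := v.1 \in rule_vars r.
Definition I_neq (v v' : vertex) : bool := (v.1 == v'.1) && (v.2 != v'.2).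
Definition I_plus (r : rule) (J : factset) (v v' : vertex) : Prop :=
  exists a, (true, a) \in body r /\
    forall f, J f -> ~~ matches (patom v v' a) (lift_fact f).
Definition I_minus (r : rule) (J : factset) (v v' : vertex) : Prop :=
  exists a, (false, a) \in body r /\
    exists f, J f /\ patom v v' a = lift_fact f.

Definition sc_edge (r : rule) (J : factset) (e : {fset vertex}) : Prop :=
  exists v v', [/\ v != v', e = [fset v; v'], is_vertex r v & is_vertex r v'] /\
                [/\ ~~ I_neq v v', ~ I_plus r J v v' & ~ I_minus r J v v'].

Definition delta_edge (r : rule) (J Jp : factset) (e : {fset vertex}) : Prop :=
  sc_edge r J e /\ ~ sc_edge r Jp e.

Definition clique (r : rule) (J : factset) (k : nat) (C : {fset vertex}) : Prop :=
  [/\ #|` C| = k, (forall v, v \in C -> is_vertex r v) &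
      forall v v', v \in C -> v' \in C -> v != v' -> sc_edge r J [fset v; v']].

Definition owner_is (rank : {fset vertex} -> {fset vertex} -> Prop)
  (r : rule) (J Jp : factset) (C e : {fset vertex}) : Prop :=
  [/\ delta_edge r J Jp e, e `<=` C &
      forall e', delta_edge r J Jp e' -> e' `<=` C -> e' <> e -> rank e e'].

Definition reported rank (r : rule) (J Jp : factset) (C : {fset vertex}) : Prop :=
  clique r J (rule_arity r) C /\
  exists e, [/\ delta_edge r J Jp e, e `<=` C & owner_is rank r J Jp C e].

Definition rho_clique (r : rule) (rho : subst) : {fset vertex} :=
  seq_fset tt (map (fun x => (x, rho x)) (rule_vars r)).

Definition Hset rank (P : program) strat i t : factset := fun f =>
  exists2 r, r \in rule_stratum P strat i & exists rho,
    reported rank r (Jst P strat i t) (Jprev P strat i t) (rho_clique r rho) /\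
    f = gatom rho (head r).

Definition strict_total (T : Type) (lt : T -> T -> Prop) : Prop :=
  [/\ forall a, ~ lt a a, forall a b c, lt a b -> lt b c -> lt a c &
      forall a b, a <> b -> lt a b \/ lt b a].

End Datalog.

(* A substitution rho is the same thing as the |X(r)|-clique {x/rho(x) | x in X(r)}.
   Since every body literal of r has at most two variables, some edge of that clique
   covers all of them, and this edge is present in G(r, J) only if the ground literal
   holds in J; hence the clique lies in G(r, J) exactly when r[rho] is applicable in J.
   As J_i^{t-1} is contained in J_i^t, an edge of the clique can only disappear from
   G(r, J_i^{t-1}) through a positive atom of r[rho] that is in J_i^t but not in
   J_i^{t-1}, i.e. in Delta_i^t; conversely such an atom kills the edge covering it.
   So the clique is seeded at a Delta-edge exactly when B(r[rho]) meets Delta_i^t, and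
   it is then reported from its owner, the Delta-edge of minimum rank. *)

From HB Require Import structures.
From mathcomp Require Import all_boot finmap.
From Stdlib Require Import Classical.
Set Implicit Arguments. Unset Strict Implicit. Unset Printing Implicit Defensive.
Local Open Scope fset_scope.

Lemma fset2_eq (T : choiceType) (v v' w w' : T) :
  [fset v; v'] = [fset w; w'] -> (w = v /\ w' = v') \/ (w = v' /\ w' = v).
Proof.
move=> e; have := fset21 w w'; have := fset22 w w'; rewrite -e !in_fset2.
have := fset21 v v'; have := fset22 v v'; rewrite e !in_fset2.
by do 4 case/orP=> /eqP ?; subst; tauto.
Qed.

Lemma pair_cover_seq (T : eqType) (A R : seq T) :
  uniq A -> size A <= 2 -> uniq R -> 2 <= size R -> {subset A <= R} ->
  exists x y, [/\ x != y, x \in R, y \in R & {subset A <= [:: x; y]}].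
Proof.
move=> uA sA uR sR AR.
have other z : exists2 y, y \in R & y != z.
  apply/hasP; rewrite has_predC; apply: contraL sR => /allP allz.
  rewrite -leqNgt; apply: (@uniq_leq_size _ _ [:: z] uR) => y /allz /=.
  by rewrite inE.
have [x0 x0R] : exists x0, x0 \in R.
  by case: R sR {uR AR other} => [|x ?] //; exists x; rewrite mem_head.
case: A uA sA AR => [|z [|w [|? ?]]] //= uA _ AR.
- by have [y yR yx] := other x0; exists y, x0.
- have zR := AR z (mem_head _ _); have [y yR yz] := other z.
  exists z, y; split => //; first by rewrite eq_sym.
  by move=> u; rewrite !inE => ->.
- rewrite inE andbT in uA.
  by exists z, w; split => //; apply: AR; rewrite !inE eqxx ?orbT.
Qed.

Lemma seq_min (T : eqType) (lt : T -> T -> Prop) (Q : T -> Prop) (s : seq T) :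
  strict_total lt -> (exists2 e, e \in s & Q e) ->
  exists m, [/\ m \in s, Q m & forall e, e \in s -> Q e -> e <> m -> lt m e].
Proof.
move=> [_ lt_trans lt_total]; elim: s => [|h s IH] [e es Qe] //.
have [[e' e's Qe']|none] := classic (exists2 e', e' \in s & Q e').
- have [m [ms Qm m_min]] := IH (ex_intro2 _ _ e' e's Qe').
  have [[Qh hm]|not_hm] := classic (Q h /\ lt h m).
  + exists h; split; rewrite ?mem_head // => e'' /predU1P[-> //|e''s Qe'' e''h].
    have [-> //|e''m] := classic (e'' = m); exact: lt_trans hm (m_min _ e''s Qe'' e''m).
  + exists m; split; rewrite ?inE ?ms ?orbT // => e'' /predU1P[->|]; last exact: m_min.
    move=> Qh hm; case: (lt_total _ _ hm) => // lhm; by case: not_hm.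
- have Qh : Q h by move: es; rewrite inE => /predU1P[<- //|es]; case: none; exists e.
  exists h; split; rewrite ?mem_head // => e'' /predU1P[-> //|e''s Qe''].
  by case: none; exists e''.
Qed.

Lemma fsubset_min (T : choiceType) (lt : {fset T} -> {fset T} -> Prop)
    (Q : {fset T} -> Prop) (K : {fset T}) :
  strict_total lt -> (exists2 e, e `<=` K & Q e) ->
  exists m, [/\ m `<=` K, Q m & forall e, e `<=` K -> Q e -> e <> m -> lt m e].
Proof.
move=> lt_total [e eK Qe].
have [|m [mK Qm m_min]] := @seq_min _ lt Q (fpowerset K) lt_total.
  by exists e; rewrite ?fpowersetE.
by exists m; split; rewrite -?fpowersetE // => e' e'K; apply: m_min; rewrite fpowersetE.
Qed.

Section Datalog.
Variables (Pred : eqType) (Var Obj : choiceType).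
Implicit Types (rho : subst Var Obj) (v w : vertex Var Obj) (a : atom Pred Var Obj)
  (f g : fact Pred Obj).

Lemma atom_varsE a z : (z \in atom_vars a) = (inl z \in a.2).
Proof.
rewrite /atom_vars mem_undup; elim: a.2 => [|u s IH] //=.
by rewrite mem_cat IH in_cons; case: u => [x|o] //=; rewrite inE.
Qed.

Lemma matches_lift f g : matches (lift_fact Var f) (lift_fact Var g) -> g = f.
Proof.
case: f g => p s [q s']; rewrite /matches /= => /andP[/eqP -> H]; congr pair.
by elim: s s' H => [|o s IH] [|o' s'] //= /andP[/eqP[->] /IH ->].
Qed.

Section Agreement.
Variables (rho : subst Var Obj) (v w : vertex Var Obj).
Hypotheses (rho_v : v.2 = rho v.1) (rho_w : w.2 = rho w.1).

Lemma psubst_agree u : psubst v w u = u \/ psubst v w u = inr (gterm rho u).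
Proof.
case: u => [x|o] /=; last by left.
case: eqP => [->|_]; first by rewrite rho_v; right.
by case: eqP => [->|_]; [rewrite rho_w; right | left].
Qed.

Lemma patom_matches_gatom a : matches (patom v w a) (lift_fact Var (gatom rho a)).
Proof.
rewrite /matches /= eqxx /=; elim: a.2 => [|u s IH] //=; rewrite IH andbT.
by case: (psubst_agree u) => ->; case: u => [x|o] //=; rewrite eqxx ?orbT.
Qed.

Lemma patom_lift a f : patom v w a = lift_fact Var f -> f = gatom rho a.
Proof.
case: a f => p s [q s']; rewrite /patom /lift_fact /gatom /= => -[-> e]; congr pair.
elim: s s' e => [|u s IH] [|o s'] //= [eu /IH ->]; congr cons.
by case: (psubst_agree u); rewrite eu; [move=> <- | case].
Qed.

Lemma patom_covered a :
  {subset atom_vars a <= [:: v.1; w.1]} -> patom v w a = lift_fact Var (gatom rho a).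
Proof.
move=> cover; rewrite /patom /lift_fact /gatom /= -map_comp; congr pair.
apply/eq_in_map => -[x|o] ax //=; have := cover x; rewrite atom_varsE !inE => /(_ ax).
by case/orP=> /eqP ->; rewrite eqxx; [|case: eqP => [->|]]; rewrite ?rho_v ?rho_w.
Qed.

End Agreement.

Section RhoClique.
Variables (r : rule Pred Var Obj) (rho : subst Var Obj).
Local Notation C := (rho_clique r rho).

Lemma mem_rho_clique w : (w \in C) = (w.1 \in rule_vars r) && (w.2 == rho w.1).
Proof.
rewrite seq_fsetE; apply/mapP/andP => [[x xr ->]|[wr /eqP e]] //=.
by exists w.1 => //; case: w e {wr} => ? ? /= ->.
Qed.

Lemma card_rho_clique : #|` C| = rule_arity r.
Proof.
rewrite size_seq_fset undup_id ?size_map ?map_inj_uniq ?undup_uniq //.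
by move=> x y [].
Qed.

Lemma rho_clique_agree w : w \in C -> w.2 = rho w.1.
Proof. by rewrite mem_rho_clique => /andP[_ /eqP]. Qed.

Lemma rho_clique_vertex w : w \in C -> is_vertex r w.
Proof. by rewrite mem_rho_clique => /andP[]. Qed.

Lemma I_plus_rho_clique J v w : v \in C -> w \in C -> I_plus r J v w ->
  exists2 a, (true, a) \in body r & ~ J (gatom rho a).
Proof.
move=> vC wC [a [ra nomatch]]; exists a => // Ja.
by have /negP[] := nomatch _ Ja; apply: patom_matches_gatom; apply: rho_clique_agree.
Qed.

Lemma I_minus_rho_clique J v w : v \in C -> w \in C -> I_minus r J v w ->
  exists2 a, (false, a) \in body r & J (gatom rho a).
Proof.
move=> vC wC [a [ra [f [Jf e]]]]; exists a => //.
by rewrite -(patom_lift (rho_clique_agree vC) (rho_clique_agree wC) e).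
Qed.

Lemma clique_rho_clique J : applicable J r rho -> clique r J (rule_arity r) C.
Proof.
move=> app; split; [exact: card_rho_clique | exact: rho_clique_vertex |].
move=> v w vC wC vw; exists v, w; split; split; rewrite ?rho_clique_vertex //.
- apply/negP=> /andP[/eqP e1 /eqP[]].
  by rewrite (rho_clique_agree vC) (rho_clique_agree wC) e1.
- by case/(I_plus_rho_clique vC wC) => a /app.
- by case/(I_minus_rho_clique vC wC) => a /app.
Qed.

Lemma sc_edge_literal J v w b a : (b, a) \in body r -> v \in C -> w \in C ->
  {subset atom_vars a <= [:: v.1; w.1]} -> sc_edge r J [fset v; w] ->
  if b then J (gatom rho a) else ~ J (gatom rho a).
Proof.
move=> ra.
have literal v' w' : ~ I_plus r J v' w' -> ~ I_minus r J v' w' -> v' \in C -> w' \in C ->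
    {subset atom_vars a <= [:: v'.1; w'.1]} ->
    if b then J (gatom rho a) else ~ J (gatom rho a).
  move=> noplus nominus vC wC cover.
  have ground := patom_covered (rho_clique_agree vC) (rho_clique_agree wC) cover.
  case: b ra => ra.
  - apply: NNPP => notJ; apply: noplus; exists a; split=> // f Jf.
    by apply/negP; rewrite ground => /matches_lift ef; apply: notJ; rewrite -ef.
  - by move=> Ja; apply: nominus; exists a; split=> //; exists (gatom rho a).
move=> vC wC cover [v' [w' [[_ e _ _] [_ noplus nominus]]]].
case: (fset2_eq e) => -[? ?]; subst; apply: (literal _ _ noplus nominus) => // z /cover.
by rewrite !inE orbC.
Qed.

Hypotheses (rule_arity_ge2 : 2 <= rule_arity r)
  (literal_arity_le2 : forall lit, lit \in body r -> atom_arity lit.2 <= 2).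

Lemma body_atom_covered b a : (b, a) \in body r ->
  exists v w, [/\ v \in C, w \in C, v != w & {subset atom_vars a <= [:: v.1; w.1]}].
Proof.
move=> ra; have a_vars : {subset atom_vars a <= rule_vars r}.
  move=> z az; rewrite mem_undup mem_cat; apply/orP; right.
  by apply/flatten_mapP; exists (b, a).
have [x [y [xy xr yr cover]]] := pair_cover_seq (undup_uniq _) (literal_arity_le2 ra)
  (undup_uniq _) rule_arity_ge2 a_vars.
exists (x, rho x), (y, rho y); split; rewrite ?mem_rho_clique ?xr ?yr ?eqxx //.
by apply: contra xy => /eqP[->].
Qed.

Lemma clique_rho_cliqueE J : clique r J (rule_arity r) C <-> applicable J r rho.
Proof.
split=> [[_ _ edges] [b a] ra|]; last exact: clique_rho_clique.
have [v [w [vC wC vw cover]]] := body_atom_covered ra.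
exact: sc_edge_literal ra vC wC cover (edges _ _ vC wC vw).
Qed.

Lemma seeded_rho_cliqueE (J Jp : factset Pred Obj) : (forall f, Jp f -> J f) ->
  applicable J r rho ->
  (exists2 e, delta_edge r J Jp e & e `<=` C) <-> body_hits (fun f => J f /\ ~ Jp f) r rho.
Proof.
move=> Jp_sub app; split=> [[e [[v [w [[vw -> vr wr] [vw1 _ _]]]] not_edge] eC]|].
- have vC : v \in C by apply: (fsubsetP eC); rewrite fset21.
  have wC : w \in C by apply: (fsubsetP eC); rewrite fset22.
  have [plus|minus] : I_plus r Jp v w \/ I_minus r Jp v w.
    apply: NNPP => no; apply: not_edge; exists v, w; split; split => //; tauto.
  + case: (I_plus_rho_clique vC wC plus) => a ra notJp.
    by exists a; do 2 split => //; apply: app ra.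
  + by case: (I_minus_rho_clique vC wC minus) => a /app Jnot /Jp_sub.
- move=> [a [ra [Ja notJp]]]; have [v [w [vC wC vw cover]]] := body_atom_covered ra.
  exists [fset v; w]; last by apply/fsubsetP => u; rewrite in_fset2 => /orP[]/eqP ->.
  have [_ _ edges] := clique_rho_clique app.
  split=> [|edge]; first exact: edges.
  exact: notJp (sc_edge_literal ra vC wC cover edge).
Qed.

End RhoClique.

Lemma reportedE rank r (J Jp : factset Pred Obj) (K : {fset vertex Var Obj}) :
  strict_total rank ->
  reported rank r J Jp K <->
  clique r J (rule_arity r) K /\ exists2 e, delta_edge r J Jp e & e `<=` K.
Proof.
move=> rank_total; split=> [[cl [e [de eK _]]]|[cl [e de eK]]]; first by split=> //; exists e.
have [m [mK dm m_min]] := fsubset_min rank_total (ex_intro2 _ _ e eK de).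
by split=> //; exists m; split=> //; split=> // e' de' e'K; apply: m_min.
Qed.

Lemma eq_body_hits (D D' : factset Pred Obj) (r : rule Pred Var Obj) rho :
  (forall f, D f <-> D' f) -> body_hits D r rho <-> body_hits D' r rho.
Proof. by move=> DD'; split=> -[a [ra /DD' Da]]; exists a. Qed.

Lemma Jprev_sub_Jst (P : program Pred Var Obj) strat i t f :
  Jprev P strat i t f -> Jst P strat i t f.
Proof. by case: t => [|t] //= Jf; left. Qed.

Lemma DstE (P : program Pred Var Obj) strat i t f :
  Dst P strat i t f <-> Jst P strat i t f /\ ~ Jprev P strat i t f.
Proof. by rewrite /Dst /Jst /Jprev; case: t => [|t] /=; tauto. Qed.

End Datalog.

Theorem theorem2 (Pred : eqType) (Var Obj : choiceType) (ar : Pred -> nat)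
  (P : program Pred Var Obj) (strat : Pred -> nat) (l i t : nat)
  (rank : {fset vertex Var Obj} -> {fset vertex Var Obj} -> Prop) :
  wf_program ar P ->
  stratification P strat l ->
  0 < i <= l ->
  strict_total rank ->
  (forall r, r \in rule_stratum P strat i ->
     2 <= rule_arity r /\ forall lit, lit \in body r -> atom_arity lit.2 <= 2) ->
  (forall f, Hset rank P strat i t f <->
             trig (rule_stratum P strat i) (Jst P strat i t) (Dst P strat i t) f) /\
  (forall f, Dst P strat i t.+1 f <-> Hset rank P strat i t f /\ ~ Jst P strat i t f).
Proof.
move=> _ _ _ rank_total arity.
have reported_applicable r rho : r \in rule_stratum P strat i ->
    reported rank r (Jst P strat i t) (Jprev P strat i t) (rho_clique r rho) <->
    applicable (Jst P strat i t) r rho /\ body_hits (Dst P strat i t) r rho.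
  move=> rR; have [ar2 lit2] := arity r rR.
  have Jp_sub := @Jprev_sub_Jst _ _ _ P strat i t.
  rewrite (reportedE _ _ _ _ rank_total) (clique_rho_cliqueE _ ar2 lit2).
  rewrite (eq_body_hits _ _ (DstE P strat i t)).
  by split=> -[app]; rewrite (seeded_rho_cliqueE ar2 lit2 Jp_sub app).
have HsetE f : Hset rank P strat i t f <->
    trig (rule_stratum P strat i) (Jst P strat i t) (Dst P strat i t) f.
  split=> -[r rR [rho]].
  - by move=> [/(reported_applicable r rho rR) [app hits] ->]; exists r => //; exists rho.
  - by move=> [app hits ->]; exists r => //; exists rho; rewrite reported_applicable.
by split=> // f; rewrite HsetE /Dst /Jst.
Qed.
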